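(* For every finite abelian group $A$, the wreath product $A\wr\mathbb{Z}=\left(\bigoplus_{i\in\mathbb{Z}}A\right)\rtimes\mathbb{Z}$ (with $\mathbb{Z}$ acting by shifting coordinates) embeds in $\mathrm{IET}$.
   Context: $\mathrm{IET}$ denotes the group of interval exchange transformations of $[0,1)$: bijections of $[0,1)$ that are orientation-preserving piecewise isometries (piecewise translations), left-continuous, with finitely many discontinuity points. *)

From Stdlib Require Import Reals ZArith.
From mathcomp Require Import all_boot all_algebra.
Set Implicit Arguments. Unset Strict Implicit. Unset Printing Implicit Defensive.
Import GRing.Theory.

Open Scope R_scope.

Definition in01 (x : R) : Prop := 0 <= x < 1.

(* f is an interval exchange transformation of [0,1): a bijection of [0,1)
   which is a translation on each piece [a i, a (i+1)) of a finite partition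
   0 = a 0 < a 1 < ... < a n = 1.  (Values of f outside [0,1) are ignored.) *)
Definition is_IET (f : R -> R) : Prop :=
  (forall x, in01 x -> in01 (f x)) /\
  (forall x y, in01 x -> in01 y -> f x = f y -> x = y) /\
  (forall y, in01 y -> exists x, in01 x /\ f x = y) /\
  exists (n : nat) (a t : nat -> R),
    a 0%nat = 0 /\ a n = 1 /\
    (forall i, (i < n)%nat -> a i < a (S i)) /\
    (forall i x, (i < n)%nat -> a i <= x < a (S i) -> f x = x + t i).

(* Wreath product A wr Z = (bigoplus_{i in Z} A) ⋊ Z.
   Elements: pairs (f, n) with f : Z -> A finitely supported, n : Z. *)
Definition finsupp (A : finZmodType) (f : Z -> A) : Prop :=
  exists N : Z, forall i : Z, Z.lt N (Z.abs i) -> f i = 0%R.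

(* Z acts by shifting coordinates: (n . g) i = g (i - n). *)
Definition wr_mul (A : finZmodType) (x y : (Z -> A) * Z) : (Z -> A) * Z :=
  (fun i => (x.1 i + y.1 (Z.sub i x.2))%R, Z.add x.2 y.2).

(* Let alpha = sqrt 2.  The wreath product A wr Z acts on the cylinder [0,1) x A by
     (f, n) . (x, a) = (x', a + sum_i f(i) [{x' - i alpha} < 1/2]),   x' = {x + n alpha}:
   n rotates the circle by n alpha, and f(i) is added on the half circle starting at
   {i alpha}.  Each element acts by translations away from finitely many breakpoints.
   The rotation number recovers n, and since alpha is irrational the points {i alpha}
   are distinct, so the jump of the second coordinate at {i alpha} recovers f(i).
   Laying the |A| copies of [0,1) side by side turns this faithful action into an
   action by interval exchanges of [0,1). *)

From Stdlib Require Import Reals ZArith Lra Lia List ClassicalEpsilon FunctionalExtensionality.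
From mathcomp Require Import all_boot all_algebra zify ssrZ.
Set Implicit Arguments. Unset Strict Implicit. Unset Printing Implicit Defensive.
Import GRing.Theory.

(* ssrint rebinds the key %Z to int_scope; the statement is about Stdlib's Z. *)
Delimit Scope Z_scope with Z.
Open Scope R_scope.

(** * Fractional parts and the irrational rotation *)

Lemma frac_part_bounds u : 0 <= frac_part u < 1.
Proof. have [] := base_fp u; lra. Qed.

Lemma frac_part_eq u v m : 0 <= v < 1 -> u - v = IZR m -> frac_part u = v.
Proof.
move=> Hv Huv; symmetry.
by apply: (proj2 (Int_part_frac_part_spec u m v Hv _)); lra.
Qed.

Lemma frac_part_id u : 0 <= u < 1 -> frac_part u = u.
Proof. by move=> Hu; apply: (frac_part_eq (m := 0%Z)) => /=; lra. Qed.

Lemma frac_part_split u : exists m, u = IZR m + frac_part u.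
Proof. by exists (Int_part u); apply: Rplus_Int_part_frac_part. Qed.

Lemma Int_part_INR_add (n : nat) x : 0 <= x < 1 -> Int_part (INR n + x) = Z.of_nat n.
Proof. by move=> Hx; symmetry; apply: Int_part_spec; rewrite -INR_IZR_INZ; lra. Qed.

Lemma frac_part_congr u v m : u - v = IZR m -> frac_part u = frac_part v.
Proof.
move=> Huv; apply: (frac_part_eq (m := (m + Int_part v)%Z)).
  exact: frac_part_bounds.
by rewrite plus_IZR /frac_part; lra.
Qed.

Lemma frac_part_translation t x y : 0 <= x -> x < y -> y < 1 ->
  ~ (x < frac_part (- t) <= y) -> frac_part (y + t) = frac_part (x + t) + (y - x).
Proof.
move=> Hx Hxy Hy Hbreak.
have [m Hm] := frac_part_split (x + t).
have [Hf0 Hf1] := frac_part_bounds (x + t).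
have [Hwrap | Hnowrap] := Rle_or_lt 1 (frac_part (x + t) + (y - x)).
  have Hb : frac_part (- t) = x + 1 - frac_part (x + t).
    by apply: (frac_part_eq (m := (- (m + 1))%Z));
      rewrite ?opp_IZR ?plus_IZR; lra.
  lra.
by apply: (frac_part_eq (m := m)); lra.
Qed.

Lemma frac_part_half_const t x y : 0 <= x -> x < y -> y < 1 ->
  ~ (x < frac_part (- t) <= y) -> ~ (x < frac_part (1/2 - t) <= y) ->
  (frac_part (y + t) < 1/2 <-> frac_part (x + t) < 1/2).
Proof.
move=> Hx Hxy Hy Hbreak Hhalf.
rewrite (frac_part_translation Hx Hxy Hy Hbreak).
have [m Hm] := frac_part_split (x + t).
have [Hf0 Hf1] := frac_part_bounds (x + t).
split=> [|Hlt]; first lra.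
have [Hcross | //] := Rle_or_lt (1/2) (frac_part (x + t) + (y - x)).
have Hb : frac_part (1/2 - t) = x + 1/2 - frac_part (x + t).
  by apply: (frac_part_eq (m := (- m)%Z)); rewrite ?opp_IZR; lra.
lra.
Qed.

Lemma frac_part_pullback t x y c : 0 <= x -> y < 1 ->
  frac_part (y + t) = frac_part (x + t) + (y - x) ->
  frac_part (x + t) < c <= frac_part (y + t) -> x < frac_part (c - t) <= y.
Proof.
move=> Hx Hy Hyx Hc.
have [m Hm] := frac_part_split (x + t).
rewrite (frac_part_eq (v := x + (c - frac_part (x + t))) (m := (- m)%Z));
  rewrite ?opp_IZR; lra.
Qed.

Definition half_gap (u : R) : R := Rmin (frac_part u) (Rabs (frac_part u - 1/2)).

Lemma frac_part_sub_small u d : 0 < d < half_gap u ->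
  (frac_part (u - d) < 1/2 <-> frac_part u < 1/2).
Proof.
rewrite /half_gap => -[d_gt0 d_lt].
have d_lt_u : d < frac_part u by have := Rmin_l (frac_part u) (Rabs (frac_part u - 1/2)); lra.
have d_lt_half : d < Rabs (frac_part u - 1/2).
  by have := Rmin_r (frac_part u) (Rabs (frac_part u - 1/2)); lra.
have [k Hk] := frac_part_split u; have := frac_part_bounds u => u_bounds.
have -> : frac_part (u - d) = frac_part u - d by apply: (frac_part_eq (m := k)); lra.
by case: (Rle_or_lt (1/2) (frac_part u)) => ?;
  [rewrite Rabs_right in d_lt_half | rewrite Rabs_left in d_lt_half]; lra.
Qed.

Lemma exists_pos_lt_all (I : eqType) (s : seq I) (g : I -> R) :
  (forall i, i \in s -> 0 < g i) -> exists d, 0 < d /\ forall i, i \in s -> d < g i.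
Proof.
elim: s => [|j s IH] Hpos; first by exists 1; split=> [|i]; rewrite ?in_nil //; lra.
have [d [d_gt0 Hd]] : exists d, 0 < d /\ forall i, i \in s -> d < g i.
  by apply: IH => i Hi; apply: Hpos; rewrite inE Hi orbT.
have gj_gt0 : 0 < g j by apply: Hpos; rewrite inE eqxx.
exists (Rmin d (g j / 2)); split=> [|i]; first by apply: Rmin_glb_lt; lra.
have := Rmin_l d (g j / 2); have := Rmin_r d (g j / 2).
by rewrite inE => ? ? /orP [/eqP -> | /Hd]; lra.
Qed.

Lemma sqrt2_irrational_nat (m p : nat) : (2 * m * m)%N = (p * p)%N -> m = 0%N.
Proof.
case: m => [//|m] E; exfalso.
have p_gt0 : (0 < p)%N by case: p E => [|p]; rewrite ?muln0.
move/(congr1 (logn 2)): E; rewrite -mulnA !lognM ?muln_gt0 // => E.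
have := congr1 odd E; rewrite !oddD /=.
by case: (odd (logn 2 m.+1)); case: (odd (logn 2 p)).
Qed.

Definition alpha : R := sqrt 2.

Lemma alpha_irrational (m p : Z) : IZR m * alpha = IZR p -> m = 0%Z.
Proof.
move=> E.
suff : Z.abs_nat m = 0%N by lia.
apply: (sqrt2_irrational_nat (p := Z.abs_nat p)); apply: Nat2Z.inj.
rewrite -!multE !Nat2Z.inj_mul !Zabs2Nat.id_abs.
have {}E : IZR (2 * m * m) = IZR (p * p).
  rewrite !mult_IZR -E /alpha.
  have := sqrt_sqrt 2 ltac:(lra); nra.
move/eq_IZR: E; lia.
Qed.

Lemma half_gap_mul_alpha m : m <> 0%Z -> 0 < half_gap (IZR m * alpha).
Proof.
move=> m_neq0; have [k Hk] := frac_part_split (IZR m * alpha).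
have [Hge0 _] := frac_part_bounds (IZR m * alpha).
apply: Rmin_glb_lt; first case: (Rle_lt_or_eq_dec _ _ Hge0) => // E.
  by case: m_neq0; apply: (@alpha_irrational _ k); rewrite -E in Hk; lra.
apply/Rabs_pos_lt/Rminus_eq_contra => E.
suff : (2 * m = 0)%Z by lia.
by apply: (@alpha_irrational _ (2 * k + 1)); rewrite mult_IZR plus_IZR mult_IZR; lra.
Qed.

Definition rotate (n : Z) (x : R) : R := frac_part (x + IZR n * alpha).

Lemma rotate_bounds n x : 0 <= rotate n x < 1.
Proof. exact: frac_part_bounds. Qed.

Lemma rotate_rotate n m x : rotate n (rotate m x) = rotate (n + m) x.
Proof.
have [k Hk] := frac_part_split (x + IZR m * alpha).
by apply: (frac_part_congr (m := (- k)%Z)); rewrite /rotate plus_IZR opp_IZR; lra.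
Qed.

Lemma rotate0 x : 0 <= x < 1 -> rotate 0 x = x.
Proof. by move=> Hx; rewrite /rotate Rmult_0_l Rplus_0_r frac_part_id. Qed.

Lemma rotate_index_inj n m : rotate n 0 = rotate m 0 -> n = m.
Proof.
rewrite /rotate !Rplus_0_l => E.
have [k1 Hk1] := frac_part_split (IZR n * alpha).
have [k2 Hk2] := frac_part_split (IZR m * alpha).
suff : (n - m = 0)%Z by lia.
by apply: (@alpha_irrational _ (k1 - k2)); rewrite !minus_IZR; lra.
Qed.

(** * Interval exchanges from piecewise translations *)

Definition pw_translation (B : list R) (f : R -> R) : Prop :=
  forall x y, 0 <= x -> x < y -> y < 1 -> (forall b, In b B -> ~ (x < b <= y)) ->
    f y = f x + (y - x).

Definition fiber_pw_translation (T : Type) (B : list R) (F : R * T -> R * T) : Prop :=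
  forall a x y, 0 <= x -> x < y -> y < 1 -> (forall b, In b B -> ~ (x < b <= y)) ->
    (F (y, a)).2 = (F (x, a)).2 /\ (F (y, a)).1 = (F (x, a)).1 + (y - x).

Definition avoiding_partition (B : list R) (lo hi : R) (n : nat) (a : nat -> R) : Prop :=
  [/\ a 0%N = lo, a n = hi, forall i, (i < n)%N -> a i < a i.+1,
      forall i, (i <= n)%N -> lo <= a i <= hi
    & forall b i, In b B -> (i < n)%N -> ~ (a i < b < a i.+1)].

Lemma avoiding_partition_cons b B lo hi n a : ~ (lo < b < hi) ->
  avoiding_partition B lo hi n a -> avoiding_partition (b :: B) lo hi n a.
Proof.
move=> Hb [a0 an a_incr a_bounds a_avoid]; split=> // b' i [<- | Hb'] Hi; last exact: a_avoid.
by have := a_bounds i (ltnW Hi); have := a_bounds i.+1 Hi; lra.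
Qed.

Lemma avoiding_partition_cat B lo mid hi n1 a1 n2 a2 :
  avoiding_partition B lo mid n1 a1 -> avoiding_partition B mid hi n2 a2 ->
  avoiding_partition (mid :: B) lo hi (n1 + n2)
    (fun i => if (i <= n1)%N then a1 i else a2 (i - n1)%N).
Proof.
move=> [a10 a1n a1_incr a1_bounds a1_avoid] [a20 a2n a2_incr a2_bounds a2_avoid].
set a := fun i => _.
have a_left i : (i <= n1)%N -> a i = a1 i by rewrite /a => ->.
have a_right i : (n1 <= i)%N -> a i = a2 (i - n1)%N.
  move=> Hi; rewrite /a; case: leqP => [Hle | //].
  have -> : i = n1 by apply/eqP; rewrite eqn_leq Hle Hi.
  by rewrite subnn a1n a20.
have lo_mid : lo <= mid by have := a1_bounds n1 (leqnn _); lra.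
have mid_hi : mid <= hi by have := a2_bounds 0%N (leq0n _); lra.
have [Hleft Hright] : (forall i, (i < n1)%N -> a i = a1 i /\ a i.+1 = a1 i.+1) /\
    (forall i, (n1 <= i)%N -> a i = a2 (i - n1)%N /\ a i.+1 = a2 (i - n1)%N.+1).
  split=> i Hi; first by rewrite !a_left // ltnW.
  by rewrite !a_right ?subSn // (leq_trans Hi).
split.
- by rewrite a_left.
- by rewrite a_right ?leq_addr // addKn.
- move=> i Hi; case: (ltnP i n1) => Hn1.
    by have [-> ->] := Hleft i Hn1; apply: a1_incr.
  by have [-> ->] := Hright i Hn1; apply: a2_incr; rewrite ltn_subLR.
- move=> i Hi; case: (leqP i n1) => Hn1.
    by rewrite a_left //; have := a1_bounds i Hn1; lra.
  have Hj : (i - n1 <= n2)%N by rewrite leq_subLR.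
  by rewrite a_right; [have := a2_bounds _ Hj; lra | exact: ltnW].
move=> b i Hb Hi; case: (ltnP i n1) => Hn1.
  have [-> ->] := Hleft i Hn1; case: Hb => [<- | /a1_avoid]; last exact.
  by have := a1_bounds i.+1 Hn1; lra.
have [-> ->] := Hright i Hn1; case: Hb => [<- | /a2_avoid]; last by apply; rewrite ltn_subLR.
have Hj : (i - n1 <= n2)%N by rewrite leq_subLR ltnW.
by have := a2_bounds _ Hj; lra.
Qed.

Lemma avoiding_partition_exists B lo hi : lo < hi -> exists n a, avoiding_partition B lo hi n a.
Proof.
elim: B lo hi => [|b B IH] lo hi Hlohi.
  exists 1%N, (fun i => if i == 0%N then lo else hi).
  by split=> // i; case: i => [|[|i]] //=; lra.
have [Hb | Hb] := classic (lo < b < hi); last first.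
  by have [n [a Ha]] := IH lo hi Hlohi; exists n, a; apply: avoiding_partition_cons.
have [n1 [a1 Ha1]] := IH lo b (proj1 Hb); have [n2 [a2 Ha2]] := IH b hi (proj2 Hb).
by exists (n1 + n2)%N; eexists; apply: avoiding_partition_cat Ha1 Ha2.
Qed.

Lemma pw_translation_IET f B :
  (forall x, in01 x -> in01 (f x)) ->
  (forall x y, in01 x -> in01 y -> f x = f y -> x = y) ->
  (forall y, in01 y -> exists x, in01 x /\ f x = y) ->
  pw_translation B f -> is_IET f.
Proof.
move=> f_maps f_inj f_surj Hf; do 3!split=> //.
have [n [a [a0 an a_incr a_bounds a_avoid]]] := avoiding_partition_exists B Rlt_0_1.
exists n, a, (fun i => f (a i) - a i); do 3!split=> //.
move=> i x Hi [Hax Hxa].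
have [Hai _] := a_bounds i (ltnW Hi); have [_ Hai1] := a_bounds i.+1 Hi.
case: (Rle_lt_or_eq_dec _ _ Hax) => [Hlt | <-]; last ring.
rewrite (Hf (a i) x) //; first ring; first lra.
by move=> b Hb [H1 H2]; apply: (a_avoid b i Hb Hi); lra.
Qed.

(** * Sums over Z of finitely supported functions *)

Lemma In_mem (T : eqType) (x : T) (s : seq T) : x \in s -> In x s.
Proof. by elim: s => //= y s IH; rewrite inE => /orP [/eqP ->|/IH]; [left | right]. Qed.

Definition zwindow (N : Z) : seq Z :=
  [seq (Z.of_nat t - N)%Z | t <- iota 0 (Z.to_nat (2 * N + 1))].

Lemma zwindow_uniq N : uniq (zwindow N).
Proof. by rewrite map_inj_uniq ?iota_uniq // => s t /= E; lia. Qed.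

Lemma mem_zwindow N i : (Z.abs i <= N)%Z -> i \in zwindow N.
Proof.
move=> Hi; apply/mapP; exists (Z.to_nat (i + N)); last by lia.
by rewrite mem_iota; apply/andP; split; lia.
Qed.

Section SumOverZ.
Variable A : finZmodType.
Implicit Types G H : Z -> A.

Definition supp_bound G : Z :=
  Z.abs (epsilon (inhabits 0%Z) (fun N => forall i, (N < Z.abs i)%Z -> G i = 0%R)).

Lemma supp_boundP G : finsupp G -> forall i, G i <> 0%R -> (Z.abs i <= supp_bound G)%Z.
Proof.
move=> HG i Gi; have [//|Hlt] := Z.le_gt_cases (Z.abs i) (supp_bound G).
by case: Gi; apply: (epsilon_spec (inhabits 0%Z) _ HG); rewrite /supp_bound in Hlt; lia.
Qed.

Lemma finsupp_subset G H : (forall i, G i = 0%R -> H i = 0%R) -> finsupp G -> finsupp H.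
Proof. by move=> GH [N HN]; exists N => i /HN /GH. Qed.

Lemma finsuppD G H : finsupp G -> finsupp H -> finsupp (fun i => G i + H i)%R.
Proof.
move=> [M HM] [N HN]; exists (Z.max M N) => i Hi.
by rewrite HM ?HN ?addr0 //; lia.
Qed.

Lemma finsupp_shift G n : finsupp G -> finsupp (fun i => G (i - n)%Z).
Proof. by move=> [N HN]; exists (N + Z.abs n)%Z => i Hi; apply: HN; lia. Qed.

Definition zsum G : A := (\sum_(i <- zwindow (supp_bound G)) G i)%R.

Lemma eq_zsum G H : G =1 H -> zsum G = zsum H.
Proof. by move=> /functional_extensionality ->. Qed.

Lemma zsumE G s : finsupp G -> uniq s -> (forall i, G i != 0%R -> i \in s) ->
  zsum G = (\sum_(i <- s) G i)%R.
Proof.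
move=> HG s_uniq s_supp.
have supp_sum r : (\sum_(i <- r) G i = \sum_(i <- [seq i <- r | G i != 0]) G i)%R.
  elim: r => [|i r IH] /=; first by rewrite !big_nil.
  by rewrite big_cons IH; case: eqP => [->|_]; rewrite ?add0r ?big_cons.
rewrite /zsum (supp_sum (zwindow _)) (supp_sum s); apply: perm_big; apply: uniq_perm;
  rewrite ?filter_uniq ?zwindow_uniq // => i; rewrite !mem_filter.
case: eqP => //= /eqP Gi; rewrite s_supp // mem_zwindow //.
by apply: supp_boundP => // /eqP; rewrite (negbTE Gi).
Qed.

Lemma zsum_window G N : finsupp G -> (supp_bound G <= N)%Z ->
  zsum G = (\sum_(i <- zwindow N) G i)%R.
Proof.
move=> HG HN; apply: zsumE; rewrite ?zwindow_uniq // => i /eqP Gi.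
by apply: mem_zwindow; have := supp_boundP HG Gi; lia.
Qed.

Lemma zsumD G H : finsupp G -> finsupp H ->
  zsum (fun i => G i + H i)%R = (zsum G + zsum H)%R.
Proof.
move=> HG HH; have HGH := finsuppD HG HH.
set N := (supp_bound G + supp_bound H + supp_bound (fun i => G i + H i)%R)%Z.
rewrite !(@zsum_window _ N) ?big_split //; rewrite /N /supp_bound; lia.
Qed.

Lemma zsumB G H : finsupp G -> finsupp H ->
  zsum (fun i => G i - H i)%R = (zsum G - zsum H)%R.
Proof.
move=> HG HH; have HGH : finsupp (fun i => G i - H i)%R.
  by apply: finsuppD HG _; apply: finsupp_subset HH => i ->; rewrite oppr0.
set N := (supp_bound G + supp_bound H + supp_bound (fun i => G i - H i)%R)%Z.
rewrite !(@zsum_window _ N) ?sumrB //; rewrite /N /supp_bound; lia.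
Qed.

Lemma zsum_shift G n : finsupp G -> zsum (fun i => G (i - n)%Z) = zsum G.
Proof.
move=> HG; set w := zwindow (supp_bound G).
rewrite (@zsumE _ [seq (i + n)%Z | i <- w]).
- by rewrite big_map; apply: eq_bigr => i _; rewrite Z.add_simpl_r.
- exact: finsupp_shift.
- by rewrite map_inj_uniq ?zwindow_uniq // => i j /=; lia.
- move=> i /eqP Gi; apply/mapP; exists (i - n)%Z; last by lia.
  exact/mem_zwindow/supp_boundP.
Qed.

Lemma zsum1 G i0 : (forall i, i <> i0 -> G i = 0%R) -> zsum G = G i0.
Proof.
move=> HG; rewrite (@zsumE _ [:: i0]) ?big_seq1 //.
  by exists (Z.abs i0) => i Hi; apply: HG; lia.
move=> i /eqP Gi; rewrite inE; apply/eqP.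
by case: (Z.eq_dec i i0) => // /HG /Gi.
Qed.

Lemma zsum0 G : (forall i, G i = 0%R) -> zsum G = 0%R.
Proof. by move=> HG; rewrite (@zsumE _ [::]) ?big_nil //; [exists 0%Z | move=> i /eqP]. Qed.

End SumOverZ.

(** * The skew-product action of A wr Z on [0,1) x A *)

Section SkewProduct.
Variable A : finZmodType.
Implicit Types (f : Z -> A) (g : (Z -> A) * Z).

Definition half_term f (z : R) (i : Z) : A :=
  if Rlt_dec (frac_part (z - IZR i * alpha)) (1/2) then f i else 0%R.

Definition cocycle f (z : R) : A := zsum (half_term f z).

Lemma finsupp_half_term f z : finsupp f -> finsupp (half_term f z).
Proof. by apply: finsupp_subset => i fi0; rewrite /half_term fi0; case: Rlt_dec. Qed.

Lemma half_term_sub_small f z d i : 0 < d < half_gap (z - IZR i * alpha) ->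
  half_term f (z - d) i = half_term f z i.
Proof.
move=> /frac_part_sub_small Hstable; rewrite /half_term.
have -> : z - d - IZR i * alpha = z - IZR i * alpha - d by ring.
by do 2!case: Rlt_dec => ? //=; tauto.
Qed.

Lemma half_term_jump f i0 d : 0 < d <= 1/2 ->
  half_term f (frac_part (IZR i0 * alpha)) i0 = f i0 /\
  half_term f (frac_part (IZR i0 * alpha) - d) i0 = 0%R.
Proof.
move=> Hd; have [k Hk] := frac_part_split (IZR i0 * alpha).
have frac0 : frac_part (frac_part (IZR i0 * alpha) - IZR i0 * alpha) = 0.
  by apply: (frac_part_eq (m := (- k)%Z)); rewrite ?opp_IZR; lra.
have frac1 : frac_part (frac_part (IZR i0 * alpha) - d - IZR i0 * alpha) = 1 - d.
  by apply: (frac_part_eq (m := (- k - 1)%Z)); rewrite ?minus_IZR ?opp_IZR; lra.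
by rewrite /half_term frac0 frac1; split; case: Rlt_dec => ? //=; lra.
Qed.

Lemma cocycleD f f' z : finsupp f -> finsupp f' ->
  cocycle (fun i => f i + f' i)%R z = (cocycle f z + cocycle f' z)%R.
Proof.
move=> Hf Hf'; rewrite /cocycle -zsumD; try exact: finsupp_half_term.
by apply: eq_zsum => i; rewrite /half_term; case: Rlt_dec => /=; rewrite ?addr0.
Qed.

Lemma cocycleB f f' z : finsupp f -> finsupp f' ->
  cocycle (fun i => f i - f' i)%R z = (cocycle f z - cocycle f' z)%R.
Proof.
move=> Hf Hf'; rewrite /cocycle -zsumB; try exact: finsupp_half_term.
by apply: eq_zsum => i; rewrite /half_term; case: Rlt_dec => /=; rewrite ?subr0.
Qed.

Lemma cocycle_shift f n x : finsupp f ->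
  cocycle (fun i => f (i - n)%Z) (rotate n x) = cocycle f x.
Proof.
move=> Hf; rewrite /cocycle -[RHS](@zsum_shift _ _ n); last exact: finsupp_half_term.
apply: eq_zsum => i; rewrite /half_term.
have [k Hk] := frac_part_split (x + IZR n * alpha).
rewrite (@frac_part_congr (rotate n x - IZR i * alpha) (x - IZR (i - n) * alpha) (- k)) //.
by rewrite /rotate minus_IZR opp_IZR; lra.
Qed.

Lemma cocycle_frac f z : cocycle f (frac_part z) = cocycle f z.
Proof.
apply: eq_zsum => i; rewrite /half_term.
have [k Hk] := frac_part_split z.
by rewrite (@frac_part_congr (frac_part z - IZR i * alpha) (z - IZR i * alpha) (- k)) //
  opp_IZR; lra.
Qed.

Definition cocycle_breaks f : list R :=
  flat_map (fun i => [:: frac_part (IZR i * alpha); frac_part (1/2 + IZR i * alpha)])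
    (zwindow (supp_bound f)).

Lemma cocycle_locally_const f z1 z2 : finsupp f -> 0 <= z1 -> z1 < z2 -> z2 < 1 ->
  (forall c, In c (cocycle_breaks f) -> ~ (z1 < c <= z2)) -> cocycle f z2 = cocycle f z1.
Proof.
move=> Hf Hz1 Hz12 Hz2 Hbreaks; apply: eq_zsum => i; rewrite /half_term.
have [-> | /eqP fi_neq0] := eqVneq (f i) 0%R; first by do 2!case: Rlt_dec.
have Hin c : c = frac_part (IZR i * alpha) \/ c = frac_part (1/2 + IZR i * alpha) ->
    ~ (z1 < c <= z2).
  move=> Hc; apply: Hbreaks; apply/in_flat_map; exists i; split.
    by apply/In_mem/mem_zwindow/supp_boundP.
  by case: Hc => ->; [left | right; left].
have := @frac_part_half_const (- (IZR i * alpha)) z1 z2 Hz1 Hz12 Hz2.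
rewrite /Rminus Ropp_involutive => Hconst.
have {}Hconst := Hconst (Hin _ (or_introl erefl)) (Hin _ (or_intror erefl)).
by do 2!case: Rlt_dec => ? //=; tauto.
Qed.

(* Just left of z0 = {i0 alpha} only the i0-th indicator changes, by irrationality. *)
Lemma cocycle_faithful f : finsupp f -> (forall z, cocycle f z = 0%R) -> forall i0, f i0 = 0%R.
Proof.
move=> Hf Hcoc i0; set z0 := frac_part (IZR i0 * alpha).
set S := [seq i <- zwindow (supp_bound f) | i != i0].
have gap_gt0 i : i \in S -> 0 < half_gap (z0 - IZR i * alpha).
  rewrite mem_filter => /andP [/eqP i_neq_i0 _].
  have [k Hk] := frac_part_split (IZR i0 * alpha).
  rewrite /half_gap (@frac_part_congr _ (IZR (i0 - i) * alpha) (- k)).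
    by apply: half_gap_mul_alpha; lia.
  by rewrite minus_IZR opp_IZR /z0; lra.
have [d0 [d0_gt0 Hd0]] := exists_pos_lt_all gap_gt0.
set d := Rmin d0 (1/2).
have d_bounds : 0 < d <= 1/2 by split; [apply: Rmin_glb_lt; lra | apply: Rmin_r].
have same_term i : i <> i0 -> half_term f (z0 - d) i = half_term f z0 i.
  move=> i_neq_i0; have [fi0 | /eqP fi_neq0] := eqVneq (f i) 0%R.
    by rewrite /half_term fi0; do 2!case: Rlt_dec.
  apply: half_term_sub_small; split; first lra.
  apply: Rle_lt_trans (Rmin_l d0 (1/2)) (Hd0 _ _).
  by rewrite mem_filter mem_zwindow ?andbT; [apply/eqP | apply: supp_boundP].
have [jump0 jump1] := half_term_jump f i0 d_bounds.
have := zsumB (finsupp_half_term z0 Hf) (finsupp_half_term (z0 - d) Hf).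
rewrite (zsum1 (i0 := i0)) => [|i /same_term ->]; last by rewrite subrr.
rewrite jump0 jump1 subr0 => ->.
by have := Hcoc z0; have := Hcoc (z0 - d); rewrite /cocycle => -> ->; rewrite subrr.
Qed.

Definition skew_act g (p : R * A) : R * A :=
  (rotate g.2 p.1, p.2 + cocycle g.1 (rotate g.2 p.1))%R.

Lemma skew_act_bounds g p : 0 <= (skew_act g p).1 < 1.
Proof. exact: rotate_bounds. Qed.

Lemma skew_act_mul g h p : finsupp g.1 -> finsupp h.1 ->
  skew_act (wr_mul g h) p = skew_act g (skew_act h p).
Proof.
case: g h p => [f n] [f' m] [x a] /= Hf Hf'.
rewrite /skew_act /= -rotate_rotate cocycleD ?cocycle_shift //; last exact: finsupp_shift.
by rewrite [(cocycle f _ + _)%R]addrC addrA.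
Qed.

Lemma skew_act_trivial g p : (forall i, g.1 i = 0%R) -> g.2 = 0%Z -> 0 <= p.1 < 1 ->
  skew_act g p = p.
Proof.
case: g p => [f n] [x a] /= f0 -> Hx; rewrite /skew_act /= rotate0 //.
rewrite /cocycle zsum0 ?addr0 // => i.
by rewrite /half_term f0; case: Rlt_dec.
Qed.

Lemma skew_act_inj g h : finsupp g.1 -> finsupp h.1 ->
  (forall p, 0 <= p.1 < 1 -> skew_act g p = skew_act h p) -> g.1 =1 h.1 /\ g.2 = h.2.
Proof.
case: g h => [f n] [f' m] /= Hf Hf' Hskew.
have n_eq_m : n = m.
  apply: rotate_index_inj.
  exact: (congr1 fst (Hskew (0, 0%R) ltac:(simpl; lra))).
subst m; split=> // i; apply/eqP; rewrite -subr_eq0; apply/eqP.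
apply: (cocycle_faithful (f := fun i => f i - f' i)%R) => [|z].
  by apply: finsuppD Hf _; apply: finsupp_subset Hf' => j ->; rewrite oppr0.
rewrite cocycleB // -cocycle_frac -[cocycle f' _]cocycle_frac.
have := congr1 snd (Hskew (rotate (- n) (frac_part z), 0%R) (rotate_bounds _ _)).
rewrite /= rotate_rotate Z.add_opp_diag_r rotate0; last exact: frac_part_bounds.
by move/addrI ->; rewrite subrr.
Qed.

Definition skew_act_breaks g : list R :=
  frac_part (- (IZR g.2 * alpha))
    :: List.map (fun c => frac_part (c - IZR g.2 * alpha)) (cocycle_breaks g.1).

Lemma skew_act_pw_translation g : finsupp g.1 -> fiber_pw_translation (skew_act_breaks g) (skew_act g).
Proof.
case: g => [f n] /= Hf a x y Hx Hxy Hy Hbreaks.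
have Hrot : rotate n y = rotate n x + (y - x).
  by apply: frac_part_translation => //; apply: Hbreaks; left.
rewrite /skew_act /= Hrot; split=> //; congr (_ + _)%R.
have [Hrx0 Hrx1] := rotate_bounds n x; have [Hry0 Hry1] := rotate_bounds n y.
rewrite -Hrot; apply: cocycle_locally_const => //; first lra.
move=> c Hc Hcin; apply: (Hbreaks (frac_part (c - IZR n * alpha))).
  by right; apply: in_map.
exact: frac_part_pullback Hx Hy Hrot Hcin.
Qed.

End SkewProduct.

(** * Stacking [0,1) x A into [0,1) *)

Section Stacking.
(* [t0] only witnesses that [T] is nonempty and serves as the default of [nth]. *)
Variables (T : finType) (t0 : T).
Definition cardR : R := INR #|T|.
Local Notation k := cardR.

Lemma cardR_gt0 : 0 < k.
Proof. by apply/lt_0_INR/ltP/card_gt0P; exists t0. Qed.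

Lemma index_enum_lt (a : T) : INR (index a (enum T)) + 1 <= k.
Proof. by rewrite -S_INR; apply/le_INR/leP; rewrite cardE index_mem mem_enum. Qed.

Definition block (y : R) : nat := Z.to_nat (Int_part (k * y)).

Definition stack (p : R * T) : R := (INR (index p.2 (enum T)) + p.1) / k.

Definition unstack (y : R) : R * T := (k * y - INR (block y), nth t0 (enum T) (block y)).

Definition stack_breaks (B : list R) : list R :=
  flat_map (fun j => List.map (fun b => (INR j + b) / k) (0 :: B)) (List.seq 0 #|T|).

Lemma block_spec y : 0 <= y < 1 ->
  (block y < #|T|)%N /\ INR (block y) <= k * y < INR (block y) + 1.
Proof.
move=> Hy; have k_gt0 := cardR_gt0.
have [I_le I_gt] := base_Int_part (k * y).
have Hky : 0 <= k * y < k by split; nra.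
have I_ge0 : (0 <= Int_part (k * y))%Z.
  have : (-1 < Int_part (k * y))%Z by apply: lt_IZR; lra.
  lia.
have HI : INR (block y) = IZR (Int_part (k * y)) by rewrite /block INR_IZR_INZ Z2Nat.id.
split; last by rewrite HI; lra.
by apply/ltP/INR_lt; change (INR (block y) < k); lra.
Qed.

Lemma stack_scaled p : k * stack p = INR (index p.2 (enum T)) + p.1.
Proof. by rewrite /stack /=; field; apply/Rgt_not_eq/cardR_gt0. Qed.

Lemma stack_bounds p : 0 <= p.1 < 1 -> 0 <= stack p < 1.
Proof.
move=> Hx; have k_gt0 := cardR_gt0.
have Ha := index_enum_lt p.2.
have := pos_INR (index p.2 (enum T)) => ?.
split; [apply: (Rmult_le_reg_l k) | apply: (Rmult_lt_reg_l k)];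
  rewrite ?Rmult_0_r ?Rmult_1_r ?stack_scaled //; lra.
Qed.

Lemma unstack_stack p : 0 <= p.1 < 1 -> unstack (stack p) = p.
Proof.
case: p => x a /= Hx; rewrite /unstack; have -> : block (stack (x, a)) = index a (enum T).
  by rewrite /block stack_scaled /= Int_part_INR_add // Nat2Z.id.
by rewrite stack_scaled /= nth_index ?mem_enum //; congr pair; ring.
Qed.

Lemma stack_unstack y : 0 <= y < 1 -> stack (unstack y) = y.
Proof.
move=> Hy; have k_gt0 := cardR_gt0; have [Hblock _] := block_spec Hy.
by rewrite /stack /unstack /= index_uniq ?enum_uniq -?cardE //; field; apply/Rgt_not_eq.
Qed.

Lemma unstack_bounds y : 0 <= y < 1 -> 0 <= (unstack y).1 < 1.
Proof. by move=> /block_spec [_ Hy]; rewrite /unstack /=; lra. Qed.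

Lemma stack_pw_translation B (F : R * T -> R * T) :
  fiber_pw_translation B F -> pw_translation (stack_breaks B) (fun y => stack (F (unstack y))).
Proof.
move=> HF y1 y2 Hy1 Hy12 Hy2 Hbreaks; have k_gt0 := cardR_gt0.
have [j1_lt [Hj1 Hj1']] := block_spec (conj Hy1 (Rlt_trans _ _ _ Hy12 Hy2)).
have [j2_lt [Hj2 Hj2']] := block_spec (conj (Rle_trans _ _ _ Hy1 (Rlt_le _ _ Hy12)) Hy2).
have Hk12 : k * y1 < k * y2 by apply: Rmult_lt_compat_l.
have no_break j b : (j < #|T|)%N -> b = 0 \/ In b B -> ~ (k * y1 < INR j + b <= k * y2).
  move=> Hj Hb [H1 H2]; apply: (Hbreaks ((INR j + b) / k)).
    apply/in_flat_map; exists j; split; first by apply/in_seq; lia.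
    by apply: (in_map (fun b => (INR j + b) / k)); case: Hb => [->|]; [left | right].
  have Ek : k * ((INR j + b) / k) = INR j + b by field; apply/Rgt_not_eq.
  by split; apply: (Rmult_lt_reg_l k) || apply: (Rmult_le_reg_l k); rewrite ?Ek; lra.
have same_block : block y1 = block y2.
  case: (ltngtP (block y1) (block y2)) => // Hlt; exfalso.
    have := le_INR _ _ (leP Hlt); rewrite S_INR => ?.
    by apply: (no_break (block y2) 0 j2_lt (or_introl erefl)); lra.
  by have := le_INR _ _ (leP Hlt); rewrite S_INR; lra.
rewrite /unstack -same_block.
have Hno : forall b, In b B -> ~ (k * y1 - INR (block y1) < b <= k * y2 - INR (block y1)).
  by move=> b Hb [H1 H2]; apply: (no_break _ b j1_lt (or_intror Hb)); lra.
have [E2 E1] := HF (nth t0 (enum T) (block y1)) (k * y1 - INR (block y1))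
  (k * y2 - INR (block y1)) ltac:(lra) ltac:(lra) ltac:(rewrite same_block; lra) Hno.
by rewrite /stack E2 E1; field; apply/Rgt_not_eq.
Qed.
End Stacking.

Section WreathIET.
Variable A : finZmodType.
Implicit Types g h : (Z -> A) * Z.

Definition wreath_iet g (y : R) : R := stack (skew_act g (unstack (0%R : A) y)).

Definition wr_inv g : (Z -> A) * Z := (fun i => - g.1 (i + g.2)%Z, - g.2)%R.

Lemma finsupp_wr_inv g : finsupp g.1 -> finsupp (wr_inv g).1.
Proof.
move=> /(finsupp_shift (- g.2)) Hshift; apply: finsupp_subset Hshift => i /=.
by rewrite Z.sub_opp_r => ->; rewrite oppr0.
Qed.

Lemma wreath_iet_bounds g y : in01 (wreath_iet g y).
Proof. by apply: (stack_bounds (0 : A)%R); apply: skew_act_bounds. Qed.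

Lemma wreath_iet_mul g h y : finsupp g.1 -> finsupp h.1 -> in01 y ->
  wreath_iet (wr_mul g h) y = wreath_iet g (wreath_iet h y).
Proof.
by move=> Hg Hh Hy; rewrite /wreath_iet skew_act_mul // unstack_stack //; apply: skew_act_bounds.
Qed.

Lemma wreath_iet_trivial g y : (forall i, g.1 i = 0%R) -> g.2 = 0%Z -> in01 y ->
  wreath_iet g y = y.
Proof.
move=> g1 g2 Hy; rewrite /wreath_iet skew_act_trivial ?stack_unstack //.
exact: unstack_bounds.
Qed.

Lemma wreath_iet_invK g y : finsupp g.1 -> in01 y ->
  wreath_iet (wr_inv g) (wreath_iet g y) = y.
Proof.
move=> Hg Hy; rewrite -wreath_iet_mul //; last exact: finsupp_wr_inv.
rewrite wreath_iet_trivial //= => [i|].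
  by rewrite Z.sub_opp_r addNr.
by rewrite Z.add_opp_diag_l.
Qed.

Lemma wreath_iet_Kinv g y : finsupp g.1 -> in01 y ->
  wreath_iet g (wreath_iet (wr_inv g) y) = y.
Proof.
move=> Hg Hy; rewrite -wreath_iet_mul //; last exact: finsupp_wr_inv.
rewrite wreath_iet_trivial //= => [i|].
  by rewrite Z.sub_add subrr.
by rewrite Z.add_opp_diag_r.
Qed.

Lemma wreath_iet_IET g : finsupp g.1 -> is_IET (wreath_iet g).
Proof.
move=> Hg; apply: (pw_translation_IET (B := stack_breaks A (skew_act_breaks g))).
- by move=> y _; apply: wreath_iet_bounds.
- by move=> x y Hx Hy E; rewrite -(wreath_iet_invK Hg Hx) E wreath_iet_invK.
- move=> y Hy; exists (wreath_iet (wr_inv g) y).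
  by split; [apply: wreath_iet_bounds | apply: wreath_iet_Kinv].
exact/stack_pw_translation/skew_act_pw_translation.
Qed.

Lemma wreath_iet_inj g h : finsupp g.1 -> finsupp h.1 ->
  (forall x, in01 x -> wreath_iet g x = wreath_iet h x) -> g.1 =1 h.1 /\ g.2 = h.2.
Proof.
move=> Hg Hh Hgh; apply: skew_act_inj => // p Hp.
have := congr1 (unstack (0%R : A)) (Hgh _ (stack_bounds (0 : A)%R Hp)).
by rewrite /wreath_iet !unstack_stack //; apply: skew_act_bounds.
Qed.

End WreathIET.

Theorem mainTheorem5 :
  forall A : finZmodType,
  exists phi : (Z -> A) * Z -> (R -> R),
    (forall g, finsupp g.1 -> is_IET (phi g)) /\
    (forall g h, finsupp g.1 -> finsupp h.1 ->
       forall x, in01 x -> phi (wr_mul g h) x = phi g (phi h x)) /\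
    (forall g h, finsupp g.1 -> finsupp h.1 ->
       (forall x, in01 x -> phi g x = phi h x) ->
       (forall i, g.1 i = h.1 i) /\ g.2 = h.2).
Proof.
move=> A; exists (@wreath_iet A); split; [|split].
- exact: wreath_iet_IET.
- by move=> g h Hg Hh x; apply: wreath_iet_mul.
- exact: wreath_iet_inj.
Qed.
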